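(* Let $G$ be a finitely generated group with decidable word problem and $S$ a finite generating set of $G$. Then the ouroboros problem for $(G,S)$ is in $\Sigma^0_1$.
   Context: The word problem of $G$ with respect to $S$ asks, given a word $w$ over $S\cup S^{-1}$, whether $w$ represents $1_G$. A tileset graph for $(G,S)$ is a finite multigraph $\Gamma=(A,B)$ whose edges are triples $(a,a',s)$ with $a,a'\in A$, $s\in S\cup S^{-1}$, such that $(a,a',s)\in B$ implies $(a',a,s^{-1})\in B$. A $\Gamma$-ouroboros is a pair $(\omega,\zeta)$ with $\omega:\{0,\dots,n\}\to G$, $n\ge 3$, injective on $\{0,\dots,n-1\}$ with $\omega(n)=\omega(0)$, and $\zeta:\{0,\dots,n\}\to A$, such that for $0\le i<n$: $d\omega_i:=\omega(i)^{-1}\omega(i+1)\in S\cup S^{-1}$ and $(\zeta(i),\zeta(i+1),d\omega_i)\in B$. The ouroboros problem for $(G,S)$: given $\Gamma$, decide whether a $\Gamma$-ouroboros exists. *)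

From mathcomp Require Import all_boot.
Set Implicit Arguments. Unset Strict Implicit. Unset Printing Implicit Defensive.

(* Model of computation: partial (mu-)recursive functions on nat.      *)
Inductive prf : Type :=
  | PZero : prf
  | PSucc : prf
  | PProj : nat -> prf
  | PComp : prf -> seq prf -> prf
  | PPrec : prf -> prf -> prf
  | PMu   : prf -> prf.

Inductive peval : prf -> seq nat -> nat -> Prop :=
  | ev_zero v : peval PZero v 0
  | ev_succ x v : peval PSucc (x :: v) x.+1
  | ev_proj i v : i < size v -> peval (PProj i) v (nth 0 v i)
  | ev_comp f gs v ws y :
      pevals gs v ws -> peval f ws y -> peval (PComp f gs) v y
  | ev_prec0 f g v y : peval f v y -> peval (PPrec f g) (0 :: v) y
  | ev_precS f g n v r y :
      peval (PPrec f g) (n :: v) r -> peval g (n :: r :: v) y ->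
      peval (PPrec f g) (n.+1 :: v) y
  | ev_mu f v n :
      peval f (n :: v) 0 ->
      (forall m, m < n -> exists k, peval f (m :: v) k.+1) ->
      peval (PMu f) v n
with pevals : seq prf -> seq nat -> seq nat -> Prop :=
  | evs_nil v : pevals [::] v [::]
  | evs_cons g gs v y ys :
      peval g v y -> pevals gs v ys -> pevals (g :: gs) v (y :: ys).

Definition decidable_set (P : nat -> Prop) : Prop :=
  exists f : prf, forall n,
    (P n /\ peval f [:: n] 1) \/ (~ P n /\ peval f [:: n] 0).

Definition sigma01 (P : nat -> Prop) : Prop :=
  exists f : prf, forall n, P n <-> exists y, peval f [:: n] y.

(* Encodings of finite data as natural numbers (Cantor pairing).       *)
Definition cpair (x y : nat) : nat := ((x + y) * (x + y).+1) %/ 2 + y.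

Fixpoint code_list (l : seq nat) : nat :=
  if l is x :: l' then (cpair x (code_list l')).+1 else 0.

(* A letter of the alphabet S u S^{-1}: (i, false) stands for s_i and
   (i, true) for s_i^{-1}. *)
Definition letter := (nat * bool)%type.
Definition code_letter (l : letter) : nat := (2 * l.1 + l.2)%N.
Definition inv_letter (l : letter) : letter := (l.1, ~~ l.2).

Definition code_word (w : seq letter) : nat := code_list (map code_letter w).

Definition edge := (nat * nat * letter)%type.
Definition code_edge (e : edge) : nat :=
  cpair e.1.1 (cpair e.1.2 (code_letter e.2)).
Definition code_graph (B : seq edge) : nat := code_list (map code_edge B).

Record is_group (G : Type) (mul : G -> G -> G) (one : G) (inv : G -> G)
  : Prop := IsGroup {
  mulA : forall x y z, mul x (mul y z) = mul (mul x y) z;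
  mul1g : forall x, mul one x = x;
  mulVg : forall x, mul (inv x) x = one
}.

Section GroupDefs.
Variables (G : Type) (mul : G -> G -> G) (one : G) (inv : G -> G).
Variable S : seq G.

Definition valid_letter (l : letter) : bool := l.1 < size S.

Definition letter_val (l : letter) : G :=
  if l.2 then inv (nth one S l.1) else nth one S l.1.

Definition word_val (w : seq letter) : G :=
  foldr (fun l acc => mul (letter_val l) acc) one w.

Definition generates : Prop :=
  forall g : G, exists w : seq letter, all valid_letter w /\ word_val w = g.

Definition word_problem (n : nat) : Prop :=
  exists w : seq letter,
    n = code_word w /\ all valid_letter w /\ word_val w = one.

Definition tileset_graph (B : seq edge) : Prop :=
  (forall e, e \in B -> valid_letter e.2) /\
  (forall a a' l, (a, a', l) \in B -> (a', a, inv_letter l) \in B).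

Definition has_ouroboros (B : seq edge) : Prop :=
  exists (n : nat) (om : nat -> G) (ze : nat -> nat),
    3 <= n /\
    (forall i j, i < n -> j < n -> om i = om j -> i = j) /\
    om n = om 0 /\
    (forall i, i < n ->
       exists l : letter, valid_letter l /\
         mul (inv (om i)) (om i.+1) = letter_val l /\
         (ze i, ze i.+1, l) \in B).

Definition ouroboros_problem (n : nat) : Prop :=
  exists B : seq edge,
    n = code_graph B /\ tileset_graph B /\ has_ouroboros B.

End GroupDefs.

(* An ouroboros is determined by its length n, the word w spelling its n steps and its
   vertex labels: omega(i) is omega(0) times the prefix of length i of w, so omega is
   injective on [0, n) iff no infix w[i..j) with i < j < n represents 1, and omega(n) =
   omega(0) iff w itself represents 1.  With a decision procedure for the word problem,
   these conditions and the edge conditions in the finite graph are checked by a total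
   computable predicate on (code of Gamma, certificate); the ouroboros problem is its
   projection, i.e. the domain of an unbounded search for a certificate. *)

From Pilot Require Import Defs.
From mathcomp Require Import all_boot zify.
From Stdlib Require Import ClassicalEpsilon.
Set Implicit Arguments. Unset Strict Implicit.

(** * Computable functions *)

Fixpoint peval_det p v y (d : peval p v y) {struct d} :
  forall y', peval p v y' -> y = y'
with pevals_det gs v ys (d : pevals gs v ys) {struct d} :
  forall ys', pevals gs v ys' -> ys = ys'.
Proof.
- case: d => [v0|x v0|i v0 _|f gs v0 ws y0 Hs Hf|f g v0 y0 Hf|f g n v0 r y0 Hr Hg|f v0 n Hn Hlt]
    y' H; inversion H as [| | |? ? ? ws' ? Hs' Hf'|? ? ? ? Hf'|? ? ? ? r' ? Hr' Hg'|? ? ? Hn' Hlt'];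
    subst => //.
  + by rewrite (pevals_det _ _ _ Hs _ Hs') in Hf; exact: peval_det _ _ _ Hf _ Hf'.
  + exact: peval_det _ _ _ Hf _ Hf'.
  + by rewrite (peval_det _ _ _ Hr _ Hr') in Hg; exact: peval_det _ _ _ Hg _ Hg'.
  + case: (ltngtP n y') => // [/Hlt' | /Hlt] [k Hk].
    * by have := peval_det _ _ _ Hn _ Hk.
    * by have := peval_det _ _ _ Hk _ Hn'.
- case: d => [v0|g gs0 v0 y0 ys0 Hg Hgs] ys' H;
    inversion H as [|? ? ? y' ys'' Hg' Hgs']; subst => //.
  by rewrite (peval_det _ _ _ Hg _ Hg') (pevals_det _ _ _ Hgs _ Hgs').
Qed.

Definition computable (k : nat) (h : seq nat -> nat) : Prop :=
  exists p : prf, forall v, size v = k -> peval p v (h v).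

Notation computable_bool k P := (computable k (fun v => nat_of_bool (P v))).

Lemma computable_ext k h h' :
  (forall v, size v = k -> h v = h' v) -> computable k h -> computable k h'.
Proof. by move=> E [p Hp]; exists p => v Hv; rewrite -E //; apply: Hp. Qed.

Lemma computable_var k i : i < k -> computable k (fun v => nth 0 v i).
Proof. by move=> ik; exists (PProj i) => v Hv; constructor; rewrite Hv. Qed.

Lemma computable_zero k : computable k (fun=> 0).
Proof. by exists PZero => v _; constructor. Qed.

Lemma computable_succ k a : computable k a -> computable k (fun v => (a v).+1).
Proof.
case=> pa Ha; exists (PComp PSucc [:: pa]) => v Hv.
by econstructor; [constructor; [exact: Ha | constructor] | constructor].
Qed.

Lemma computable_comp1 k f a :
  computable 1 (fun v => f (nth 0 v 0)) -> computable k a -> computable k (fun v => f (a v)).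
Proof.
move=> [pf Hf] [pa Ha]; exists (PComp pf [:: pa]) => v Hv.
by econstructor; [constructor; [exact: Ha | constructor] | exact: Hf [:: a v] erefl].
Qed.

Lemma computable_const k c : computable k (fun=> c).
Proof. by elim: c => [|c]; [exact: computable_zero | exact: computable_succ]. Qed.

Lemma pevals_proj (s : seq nat) v : all (fun i => i < size v) s ->
  pevals (map PProj s) v (map (nth 0 v) s).
Proof.
elim: s => [|i s IH] /=; first by constructor.
by case/andP=> Hi Hs; constructor; [constructor | exact: IH].
Qed.

Lemma computable_select k m f (sel : seq nat) :
  computable m f -> size sel = m -> all (fun i => i < k) sel ->
  computable k (fun u => f (map (nth 0 u) sel)).
Proof.
move=> [pf Hf] Hsel Hk; exists (PComp pf (map PProj sel)) => v Hv.
econstructor; first by apply: pevals_proj; rewrite Hv.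
by apply: Hf; rewrite size_map.
Qed.

Lemma computable_behead k a : computable k a -> computable k.+1 (fun u => a (behead u)).
Proof.
move=> Ca; apply: (computable_ext _ (computable_select (sel := iota 1 k) Ca _ _)).
- by move=> [|x v] //= [Hv]; rewrite map_nth_iota /= ?drop0 ?take_oversize ?Hv ?subn1.
- by rewrite size_iota.
- by apply/allP => i; rewrite mem_iota; lia.
Qed.

Lemma computable_skip_second k a :
  computable k.+1 a -> computable k.+2 (fun u => a (nth 0 u 0 :: behead (behead u))).
Proof.
move=> Ca; apply: (computable_ext _ (computable_select (sel := 0 :: iota 2 k) Ca _ _)).
- by move=> [|x [|y v]] //= [Hv]; rewrite map_nth_iota /= ?drop0 ?take_oversize ?Hv ?subn2.
- by rewrite /= size_iota.
- by apply/allP => i; rewrite inE mem_iota; lia.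
Qed.

Lemma computable_rec k (b f g : seq nat -> nat) (h : nat -> seq nat -> nat) :
  computable k b -> computable k f -> computable k.+2 g ->
  (forall v, h 0 v = f v) -> (forall n v, h n.+1 v = g [:: n, h n v & v]) ->
  computable k (fun v => h (b v) v).
Proof.
move=> [pb Hb] [pf Hf] [pg Hg] h0 hS.
have Hrec n v : size v = k -> peval (PPrec pf pg) (n :: v) (h n v).
  move=> Hv; elim: n => [|n IH]; first by rewrite h0; constructor; apply: Hf.
  by rewrite hS; econstructor; [exact: IH | apply: Hg; rewrite /= Hv].
exists (PComp (PPrec pf pg) (pb :: map PProj (iota 0 k))) => v Hv.
econstructor; last by apply: Hrec.
constructor; first exact: Hb.
rewrite -[X in pevals _ _ X]take_size -(map_nth_iota0 0) Hv //.
by apply: pevals_proj; apply/allP => i; rewrite mem_iota; lia.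
Qed.

Lemma computable_add k a b :
  computable k a -> computable k b -> computable k (fun v => a v + b v).
Proof.
move=> Ca Cb.
apply: (computable_rec (h := fun n v => a v + n) (g := fun u => (nth 0 u 1).+1) Cb Ca).
- exact/computable_succ/computable_var.
- by move=> v; rewrite addn0.
- by move=> n v; rewrite addnS.
Qed.

Lemma computable_pred k a : computable k a -> computable k (fun v => (a v).-1).
Proof.
move=> Ca; apply: (computable_rec (h := fun n v => n.-1) (g := fun u => nth 0 u 0) Ca) => //.
- exact: computable_zero.
- exact: computable_var.
Qed.

Lemma computable_sub k a b :
  computable k a -> computable k b -> computable k (fun v => a v - b v).
Proof.
move=> Ca Cb.
apply: (computable_rec (h := fun n v => a v - n) (g := fun u => (nth 0 u 1).-1) Cb Ca).
- exact/computable_pred/computable_var.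
- by move=> v; rewrite subn0.
- by move=> n v; rewrite subnS.
Qed.

Lemma computable_mul k a b :
  computable k a -> computable k b -> computable k (fun v => a v * b v).
Proof.
move=> Ca Cb; apply: (computable_rec (h := fun n v => a v * n)
  (g := fun u => nth 0 u 1 + a (behead (behead u))) Cb (computable_zero k)).
- exact: computable_add (computable_var _) (computable_behead (computable_behead Ca)).
- by move=> v; rewrite muln0.
- by move=> n v; rewrite mulnS addnC.
Qed.

Lemma computable_eq0 k a : computable k a -> computable_bool k (fun v => a v == 0).
Proof.
move=> Ca; apply: (computable_rec (h := fun n v => nat_of_bool (n == 0)) (g := fun=> 0) Ca) => //.
- exact: computable_const.
- exact: computable_zero.
Qed.

Lemma computable_eq k a b :
  computable k a -> computable k b -> computable_bool k (fun v => a v == b v).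
Proof.
move=> Ca Cb; apply: (computable_ext _ (computable_eq0 (computable_add
  (computable_sub Ca Cb) (computable_sub Cb Ca)))).
by move=> v _; congr nat_of_bool; apply/eqP/eqP; lia.
Qed.

Lemma computable_leq k a b :
  computable k a -> computable k b -> computable_bool k (fun v => a v <= b v).
Proof.
move=> Ca Cb; apply: (computable_ext _ (computable_eq0 (computable_sub Ca Cb))).
by move=> v _; rewrite subn_eq0.
Qed.

Lemma computable_and k P Q :
  computable_bool k P -> computable_bool k Q -> computable_bool k (fun v => P v && Q v).
Proof.
move=> CP CQ; apply: (computable_ext _ (computable_mul CP CQ)).
by move=> v _; case: (P v); case: (Q v).
Qed.

Lemma computable_not k P : computable_bool k P -> computable_bool k (fun v => ~~ P v).
Proof.
move=> CP; apply: (computable_ext _ (computable_sub (computable_const k 1) CP)).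
by move=> v _; case: (P v).
Qed.

Lemma computable_or k P Q :
  computable_bool k P -> computable_bool k Q -> computable_bool k (fun v => P v || Q v).
Proof.
move=> CP CQ.
apply: (computable_ext _ (computable_not (computable_and (computable_not CP) (computable_not CQ)))).
by move=> v _; case: (P v); case: (Q v).
Qed.

Lemma computable_implb k P Q :
  computable_bool k P -> computable_bool k Q -> computable_bool k (fun v => P v ==> Q v).
Proof.
move=> CP CQ; apply: (computable_ext _ (computable_or (computable_not CP) CQ)).
by move=> v _; case: (P v); case: (Q v).
Qed.

Lemma computable_odd k a : computable k a -> computable_bool k (fun v => odd (a v)).
Proof.
move=> Ca; apply: (computable_rec (h := fun n v => nat_of_bool (odd n))
  (g := fun u => 1 - nth 0 u 1) Ca (computable_zero k)) => //.
- exact: computable_sub (computable_const _ 1) (computable_var _).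
- by move=> n v /=; case: (odd n).
Qed.

Lemma computable_half k a : computable k a -> computable k (fun v => (a v)./2).
Proof.
move=> Ca; apply: (computable_rec (h := fun n v => n./2)
  (g := fun u => nth 0 u 1 + odd (nth 0 u 0)) Ca (computable_zero k)) => //.
- exact: computable_add (computable_var _) (computable_odd (computable_var _)).
- by move=> n v /=; rewrite uphalf_half addnC.
Qed.

Lemma computable_if k P a b : computable_bool k P -> computable k a -> computable k b ->
  computable k (fun v => if P v then a v else b v).
Proof.
move=> CP Ca Cb; apply: (computable_ext _
  (computable_add (computable_mul CP Ca) (computable_mul (computable_not CP) Cb))).
by move=> v _; case: (P v); rewrite /= ?mul1n ?mul0n ?addn0.
Qed.

Lemma computable_all k b (Q : seq nat -> nat -> bool) :
  computable k b -> computable_bool k.+1 (fun u => Q (behead u) (nth 0 u 0)) ->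
  computable_bool k (fun v => all (Q v) (iota 0 (b v))).
Proof.
move=> Cb CQ; apply: (computable_rec (h := fun n v => nat_of_bool (all (Q v) (iota 0 n)))
  (g := fun u => nth 0 u 1 * Q (behead (behead u)) (nth 0 u 0)) Cb (computable_const k 1)) => //.
- exact: computable_mul (computable_var _) (computable_skip_second CQ).
- by move=> n v; rewrite -addn1 iotaD all_cat /= andbT; case: (all _ _); case: (Q v n).
Qed.

Lemma computable_has k b (Q : seq nat -> nat -> bool) :
  computable k b -> computable_bool k.+1 (fun u => Q (behead u) (nth 0 u 0)) ->
  computable_bool k (fun v => has (Q v) (iota 0 (b v))).
Proof.
move=> Cb CQ; apply: (computable_ext _ (computable_not
  (computable_all (Q := fun v i => ~~ Q v i) Cb (computable_not CQ)))).
by move=> v _; rewrite (eq_all (a2 := predC (Q v))) // all_predC negbK.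
Qed.

Lemma computable_sum k b (F : seq nat -> nat -> nat) :
  computable k b -> computable k.+1 (fun u => F (behead u) (nth 0 u 0)) ->
  computable k (fun v => \sum_(0 <= i < b v) F v i).
Proof.
move=> Cb CF; apply: (computable_rec (h := fun n v => \sum_(0 <= i < n) F v i)
  (g := fun u => nth 0 u 1 + F (behead (behead u)) (nth 0 u 0)) Cb (computable_zero k)).
- exact: computable_add (computable_var _) (computable_skip_second CF).
- by move=> v; rewrite big_geq.
- by move=> n v; rewrite big_nat_recr.
Qed.

(** * Codes of pairs and lists *)

Lemma cpair_double x y : (cpair x y).*2 = (x + y) * (x + y).+1 + y.*2.
Proof.
have even_s : 2 %| (x + y) * (x + y).+1 by rewrite dvdn2 oddM /=; case: odd.
by rewrite /cpair doubleD -muln2 divnK.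
Qed.

Lemma cpair_inj x y x' y' : cpair x y = cpair x' y' -> x = x' /\ y = y'.
Proof.
move=> /(congr1 double); rewrite !cpair_double -!muln2 => E.
suff s_eq : x + y = x' + y' by rewrite s_eq in E; lia.
case: (ltngtP (x + y) (x' + y')) => // lt_s; nia.
Qed.

Lemma cpair_geL x y : x <= cpair x y.
Proof. by rewrite -leq_double cpair_double; nia. Qed.

Lemma cpair_geR x y : y <= cpair x y.
Proof. by rewrite /cpair leq_addl. Qed.

Lemma computable_cpair k a b :
  computable k a -> computable k b -> computable k (fun v => cpair (a v) (b v)).
Proof.
move=> Ca Cb; have Cs := computable_add Ca Cb.
have Ctri := computable_half (computable_mul Cs (computable_succ Cs)).
apply: (computable_ext _ (computable_add Ctri Cb)).
by move=> v _; rewrite /cpair divn2.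
Qed.

(* The first coordinate of the preimage of z under f, found by bounded search; [pi1] and
   [pi2] are defined this way so that they are visibly primitive recursive. *)
Definition preimage_fst (f : nat -> nat -> nat) z :=
  \sum_(0 <= x < z.+1) x * has (fun y => f x y == z) (iota 0 z.+1).

Definition pi1 := preimage_fst cpair.
Definition pi2 := preimage_fst (fun y x => cpair x y).

Lemma sum_single n (F : nat -> nat) a :
  a < n -> (forall i, i < n -> i != a -> F i = 0) -> \sum_(0 <= i < n) F i = F a.
Proof.
move=> Ha HF; rewrite (bigD1_seq a) ?mem_index_iota ?iota_uniq //=.
by rewrite big1_seq ?addn0 // => i /andP [ne_ia]; rewrite mem_index_iota => /HF; apply.
Qed.

Lemma preimage_fstE f x y :
  (forall x y x' y', f x y = f x' y' -> x = x') -> x <= f x y -> y <= f x y ->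
  preimage_fst f (f x y) = x.
Proof.
move=> f_inj le_x le_y; rewrite /preimage_fst (@sum_single _ _ x) ?ltnS //.
- suff -> : has (fun y' => f x y' == f x y) (iota 0 (f x y).+1) by rewrite muln1.
  by apply/hasP; exists y; rewrite ?mem_iota ?ltnS.
- move=> x' _ ne_x; case: hasP => [[y' _ /eqP /f_inj E]|]; last by rewrite muln0.
  by rewrite E eqxx in ne_x.
Qed.

Lemma pi1_cpair x y : pi1 (cpair x y) = x.
Proof.
by apply: preimage_fstE; [move=> ? ? ? ? /cpair_inj [] | apply: cpair_geL | apply: cpair_geR].
Qed.

Lemma pi2_cpair x y : pi2 (cpair x y) = y.
Proof.
by apply: (preimage_fstE (f := fun y x => cpair x y));
  [move=> ? ? ? ? /cpair_inj [] | apply: cpair_geR | apply: cpair_geL].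
Qed.

Lemma computable_preimage_fst k f a :
  (forall k b c, computable k b -> computable k c -> computable k (fun v => f (b v) (c v))) ->
  computable k a -> computable k (fun v => preimage_fst f (a v)).
Proof.
move=> Cf Ca; have Ca2 := computable_behead (computable_behead Ca).
apply: (computable_sum (F := fun v x => x * has (fun y => f x y == a v) (iota 0 (a v).+1))).
  exact: computable_succ.
apply: computable_mul; first exact: computable_var.
apply: (computable_has (Q := fun u y => f (nth 0 u 0) y == a (behead u))).
  exact: computable_succ (computable_behead Ca).
exact: computable_eq (Cf _ _ _ (computable_behead (computable_var _)) (computable_var _)) Ca2.
Qed.

Lemma computable_pi1 k a : computable k a -> computable k (fun v => pi1 (a v)).
Proof. by apply: computable_preimage_fst => k' b c Cb Cc; apply: computable_cpair. Qed.

Lemma computable_pi2 k a : computable k a -> computable k (fun v => pi2 (a v)).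
Proof. by apply: computable_preimage_fst => k' b c Cb Cc; apply: computable_cpair. Qed.

Lemma mem_iota0 n i : (i \in iota 0 n) = (i < n).
Proof. by rewrite mem_iota. Qed.

Definition code_head t := pi1 t.-1.
Definition code_behead t := pi2 t.-1.
Definition code_nth t i := code_head (iter i code_behead t).
Definition code_mem t c :=
  has (fun i => (iter i code_behead t != 0) && (code_nth t i == c)) (iota 0 t).

Fixpoint code_window L j d :=
  if d is d'.+1 then (cpair (code_nth L (j - d)) (code_window L j d')).+1 else 0.

Lemma code_behead_list s : code_behead (code_list s) = code_list (behead s).
Proof.
case: s => [|x s]; last by rewrite /code_behead /= pi2_cpair.
by rewrite /code_behead /= -{2}(pi2_cpair 0 0).
Qed.

Lemma iter_code_behead i s : iter i code_behead (code_list s) = code_list (drop i s).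
Proof. by elim: i s => [|i IH] s; rewrite ?drop0 // iterSr code_behead_list IH; case: s. Qed.

Lemma code_nth_list s i : i < size s -> code_nth (code_list s) i = nth 0 s i.
Proof.
by move=> Hi; rewrite /code_nth iter_code_behead (drop_nth 0 Hi) /code_head /= pi1_cpair.
Qed.

Lemma size_le_code_list s : size s <= code_list s.
Proof. by elim: s => //= x s IH; rewrite ltnS (leq_trans IH) ?cpair_geR. Qed.

Lemma code_list_eq0 s : (code_list s == 0) = (s == [::]).
Proof. by case: s. Qed.

Lemma code_memE s c : code_mem (code_list s) c = (c \in s).
Proof.
have nonempty i : (iter i code_behead (code_list s) != 0) = (i < size s).
  by rewrite iter_code_behead code_list_eq0 -size_eq0 size_drop subn_eq0 -ltnNge.
apply/hasP/(nthP 0) => [[i _]|[i Hi <-]].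
  by rewrite nonempty => /andP [Hi /eqP <-]; exists i; rewrite ?code_nth_list.
exists i; first by rewrite mem_iota (leq_trans Hi (size_le_code_list s)).
by rewrite nonempty Hi code_nth_list ?eqxx.
Qed.

Lemma mem_lt_code_list s c : c \in s -> c < code_list s.
Proof.
elim: s => //= x s IH; rewrite inE ltnS => /orP [/eqP -> | /IH /ltnW lt_c].
  exact: cpair_geL.
exact: leq_trans lt_c (cpair_geR _ _).
Qed.

Lemma code_windowE L j d :
  d <= j -> code_window L j d = code_list [seq code_nth L t | t <- iota (j - d) d].
Proof.
elim: d => //= d IH Hd; rewrite IH ?(ltnW Hd) //.
by have -> : (j - d.+1).+1 = j - d by lia.
Qed.

Lemma computable_code_head k a : computable k a -> computable k (fun v => code_head (a v)).
Proof. by move=> Ca; apply/computable_pi1/computable_pred. Qed.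

Lemma computable_code_behead k a :
  computable k a -> computable k (fun v => code_behead (a v)).
Proof. by move=> Ca; apply/computable_pi2/computable_pred. Qed.

Lemma computable_iter_code_behead k a b :
  computable k a -> computable k b -> computable k (fun v => iter (b v) code_behead (a v)).
Proof.
move=> Ca Cb; apply: (computable_rec (h := fun n v => iter n code_behead (a v))
  (g := fun u => code_behead (nth 0 u 1)) Cb Ca) => //.
exact/computable_code_behead/computable_var.
Qed.

Lemma computable_code_nth k a b :
  computable k a -> computable k b -> computable k (fun v => code_nth (a v) (b v)).
Proof. by move=> Ca Cb; apply/computable_code_head/computable_iter_code_behead. Qed.

Lemma computable_code_mem k a b :
  computable k a -> computable k b -> computable_bool k (fun v => code_mem (a v) (b v)).
Proof.
move=> Ca Cb; have Ca1 := computable_behead Ca; have Cb1 := computable_behead Cb.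
have Ci : computable k.+1 (fun u => nth 0 u 0) by exact: computable_var.
apply: (computable_has
  (Q := fun v i => (iter i code_behead (a v) != 0) && (code_nth (a v) i == b v))) => //.
apply: computable_and; last exact: computable_eq (computable_code_nth Ca1 Ci) Cb1.
exact/computable_not/(computable_eq (computable_iter_code_behead Ca1 Ci))/computable_zero.
Qed.

Lemma computable_code_window k L j d : computable k L -> computable k j -> computable k d ->
  computable k (fun v => code_window (L v) (j v) (d v)).
Proof.
move=> CL Cj Cd; have CL2 := computable_behead (computable_behead CL).
have Cj2 := computable_behead (computable_behead Cj).
pose g u := (cpair (code_nth (L (behead (behead u))) (j (behead (behead u)) - (nth 0 u 0).+1))
                   (nth 0 u 1)).+1.
apply: (computable_rec (h := fun n v => code_window (L v) (j v) n) (g := g) Cd) => //.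
  exact: computable_zero.
apply/computable_succ/computable_cpair; last exact: computable_var.
exact/(computable_code_nth CL2)/(computable_sub Cj2)/computable_succ/computable_var.
Qed.

(** * The certificate checker *)

(* Under a bounded quantifier or a recursion the argument list gains a new head entry, so
   hypotheses about the outer arguments are transported along [behead]. *)
Ltac computable_lift :=
  repeat match goal with
  | H : computable ?m _ |- computable ?m.+1 _ => move/computable_behead in H; cbv beta in H
  end.

Ltac computable_step :=
  cbv beta; computable_lift;
  match goal with
  | |- computable _ (fun _ => ?c) => exact: computable_const
  | H : computable ?k ?f |- computable ?k ?f => exact: H
  | |- computable _ (fun u => nth 0 u _) => exact: computable_var
  | |- computable _ (fun u => nth 0 (behead u) _) => exact: computable_behead (computable_var _)
  | |- computable _ (fun _ => nat_of_bool (_ && _)) => apply: computable_and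
  | |- computable _ (fun _ => nat_of_bool (_ ==> _)) => apply: computable_implb
  | |- computable _ (fun _ => nat_of_bool (~~ _)) => apply: computable_not
  | |- computable _ (fun _ => nat_of_bool (_ <= _)) => apply: computable_leq
  | |- computable _ (fun _ => nat_of_bool (odd _)) => apply: computable_odd
  | |- computable _ (fun _ => nat_of_bool (all _ (iota 0 _))) => apply: computable_all
  | |- computable _ (fun _ => nat_of_bool (code_mem _ _)) => apply: computable_code_mem
  | |- computable _ (fun _ => if _ then _ else _) => apply: computable_if
  | |- computable _ (fun _ => (_).+1) => apply: computable_succ
  | |- computable _ (fun _ => (_).-1) => apply: computable_pred
  | |- computable _ (fun _ => _ - _) => apply: computable_sub
  | |- computable _ (fun _ => pi1 _) => apply: computable_pi1
  | |- computable _ (fun _ => pi2 _) => apply: computable_pi2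
  | |- computable _ (fun _ => cpair _ _) => apply: computable_cpair
  | |- computable _ (fun _ => code_nth _ _) => apply: computable_code_nth
  | |- computable _ (fun _ => code_window _ _ _) => apply: computable_code_window
  | H : forall k a, computable k a -> _ |- _ => apply: H
  end.

Ltac computable_auto := repeat computable_step.

Definition valid_code N c := c < N.*2.
Definition inv_code c := if odd c then c.-1 else c.+1.
Definition edge_code a a' c := cpair a (cpair a' c).

(* Members of a list are smaller than its code, so it suffices to inspect the codes below n. *)
Definition tileset_check N n :=
  all (fun e => code_mem n e ==> valid_code N (pi2 (pi2 e)) &&
     code_mem n (edge_code (pi1 (pi2 e)) (pi1 e) (inv_code (pi2 (pi2 e))))) (iota 0 n).

(* Here n codes the graph, L and Z code the m letters and the m + 1 vertex labels of a
   candidate ouroboros, and [code_window L j (j - i)] codes its subword w[i..j). *)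
Definition ouroboros_check N (wp : nat -> bool) n m L Z :=
  [&& 3 <= m, tileset_check N n,
      all (fun i => valid_code N (code_nth L i) &&
         code_mem n (edge_code (code_nth Z i) (code_nth Z i.+1) (code_nth L i))) (iota 0 m),
      all (fun j => all (fun i => ~~ wp (code_window L j (j - i))) (iota 0 j)) (iota 0 m)
    & wp (code_window L m m)].

Lemma computable_ouroboros_check k N wp n m L Z :
  (forall k' a, computable k' a -> computable_bool k' (fun v => wp (a v))) ->
  computable k n -> computable k m -> computable k L -> computable k Z ->
  computable_bool k (fun v => ouroboros_check N wp (n v) (m v) (L v) (Z v)).
Proof.
rewrite /ouroboros_check /tileset_check /valid_code /edge_code /inv_code => Cwp Cn Cm CL CZ.
by computable_auto.
Qed.

Definition ouroboros_certificate N wp n w :=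
  ouroboros_check N wp n (pi1 w) (pi1 (pi2 w)) (pi2 (pi2 w)).

Lemma computable_ouroboros_certificate N wp :
  (forall k a, computable k a -> computable_bool k (fun v => wp (a v))) ->
  computable_bool 2 (fun v => ouroboros_certificate N wp (nth 0 v 1) (nth 0 v 0)).
Proof. by move=> Cwp; apply: computable_ouroboros_check => //; computable_auto. Qed.

Definition decode_letter (c : nat) : letter := (c./2, odd c).

Lemma code_letterK : cancel code_letter decode_letter.
Proof.
case=> i b; rewrite /code_letter /decode_letter /= mul2n.
by case: b; rewrite ?addn1 ?addn0 /= ?uphalf_double ?doubleK ?odd_double.
Qed.

Lemma decode_letterK : cancel decode_letter code_letter.
Proof. by move=> c; rewrite /code_letter /decode_letter /= mul2n addnC odd_double_half. Qed.

Lemma code_list_inj : injective code_list.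
Proof. by elim=> [|x s IH] [|y t] //= [/cpair_inj [-> /IH ->]]. Qed.

Lemma code_edge_inj : injective code_edge.
Proof.
move=> [[a a'] l] [[b b'] l']; rewrite /code_edge /= => /cpair_inj [-> /cpair_inj [-> E]].
by rewrite (can_inj code_letterK E).
Qed.

Lemma code_word_inj : injective code_word.
Proof. exact/(inj_comp code_list_inj)/inj_map/can_inj/code_letterK. Qed.

Lemma cpair_surj z : exists x y, cpair x y = z.
Proof.
elim: z => [|z [[|x] [y <-]]]; first by exists 0, 0.
- by exists y.+1, 0; apply/double_inj; rewrite doubleS !cpair_double -!muln2; nia.
- by exists x, y.+1; apply/double_inj; rewrite doubleS !cpair_double -!muln2; nia.
Qed.

Lemma code_graph_surj n : exists B, code_graph B = n.
Proof.
elim/ltn_ind: n => [[|n]] IH; first by exists [::].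
have [c [r En]] := cpair_surj n.
have [B EB] : exists B, code_graph B = r by apply: IH; rewrite -En ltnS cpair_geR.
have [a [y Ec]] := cpair_surj c; have [a' [c' Ey]] := cpair_surj y.
exists ((a, a', decode_letter c') :: B).
by rewrite /code_graph /= /code_edge /= decode_letterK -/(code_graph B) EB Ey Ec En.
Qed.

Lemma valid_codeE (T : Type) (S : seq T) l :
  valid_code (size S) (code_letter l) = valid_letter S l.
Proof. by case: l => i b; rewrite /valid_code /code_letter /valid_letter /=; case: b; lia. Qed.

Lemma inv_codeE l : inv_code (code_letter l) = code_letter (inv_letter l).
Proof.
case: l => i b; rewrite /inv_code /code_letter /= oddD mul2n odd_double.
by case: b; rewrite /= ?addn1 ?addn0.
Qed.

Lemma code_mem_graph B e : code_mem (code_graph B) (code_edge e) = (e \in B).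
Proof. by rewrite code_memE mem_map //; exact: code_edge_inj. Qed.

Lemma tileset_checkP (T : Type) (S : seq T) B :
  tileset_check (size S) (code_graph B) <-> tileset_graph S B.
Proof.
have edge_ok a a' l :
  valid_code (size S) (pi2 (pi2 (code_edge (a, a', l)))) &&
  code_mem (code_graph B) (edge_code (pi1 (pi2 (code_edge (a, a', l))))
    (pi1 (code_edge (a, a', l))) (inv_code (pi2 (pi2 (code_edge (a, a', l))))))
  = valid_letter S l && ((a', a, inv_letter l) \in B).
  by rewrite /code_edge /= !pi2_cpair !pi1_cpair valid_codeE inv_codeE -code_mem_graph.
split=> [/allP check | [Hvalid Hrev]].
  have {}check e : e \in B -> valid_letter S e.2 && ((e.1.2, e.1.1, inv_letter e.2) \in B).
    move=> Be; case: e Be => [[a a'] l] Be; rewrite -edge_ok.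
    apply: (implyP (check _ _)); last by rewrite code_mem_graph.
    by rewrite mem_iota /= /code_graph mem_lt_code_list // map_f.
  by split=> [e /check /andP [] | a a' l /check /andP []].
apply/allP => c _; apply/implyP; rewrite /code_graph code_memE => /mapP [[[a a'] l] Be ->].
by rewrite edge_ok (Hvalid _ Be) (Hrev _ _ _ Be).
Qed.

Definition decode_word L m : seq letter := mkseq (fun t => decode_letter (code_nth L t)) m.

Lemma decode_word_code w : decode_word (code_word w) (size w) = w.
Proof.
apply: (@eq_from_nth _ (0, false)); rewrite size_mkseq // => i Hi.
by rewrite nth_mkseq // /code_word code_nth_list ?size_map // (nth_map (0, false)) ?code_letterK.
Qed.

Lemma code_nth_decode_word L m i :
  i < m -> code_nth L i = code_letter (nth (0, false) (decode_word L m) i).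
Proof. by move=> Hi; rewrite nth_mkseq ?decode_letterK. Qed.

Lemma step_check_decode_word (T : Type) (S : seq T) B m L Z i : i < m ->
  valid_code (size S) (code_nth L i) &&
  code_mem (code_graph B) (edge_code (code_nth Z i) (code_nth Z i.+1) (code_nth L i))
  = valid_letter S (nth (0, false) (decode_word L m) i) &&
    ((code_nth Z i, code_nth Z i.+1, nth (0, false) (decode_word L m) i) \in B).
Proof. by move=> Hi; rewrite (code_nth_decode_word L Hi) valid_codeE -code_mem_graph. Qed.

Lemma code_window_decode_word L m i j : i <= j -> j <= m ->
  code_window L j (j - i) = code_word (drop i (take j (decode_word L m))).
Proof.
move=> Hij Hjm; rewrite code_windowE ?leq_subr // subKn // /code_word /decode_word /mkseq.
rewrite -map_take -map_drop take_iota drop_iota (minn_idPl Hjm) -!map_comp.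
by congr code_list; apply: eq_map => t /=; rewrite decode_letterK.
Qed.

(** * Ouroboroi as words *)

Lemma bounded_choice_seq (T : Type) (x0 : T) (P : nat -> T -> Prop) n :
  (forall i, i < n -> exists x, P i x) ->
  exists s, size s = n /\ forall i, i < n -> P i (nth x0 s i).
Proof.
elim: n => [|n IH] HP; first by exists [::].
have [s [Hs Ps]] := IH (fun i Hi => HP i (ltnW Hi)).
have [x Px] := HP n (ltnSn n).
exists (rcons s x); rewrite size_rcons Hs; split=> // i; rewrite ltnS leq_eqVlt nth_rcons Hs.
by case/orP => [/eqP -> | lt_in]; rewrite ?ltnn ?eqxx ?lt_in //; apply: Ps.
Qed.

Section Ouroboros.

Variables (G : Type) (mul : G -> G -> G) (one : G) (inv : G -> G).
Hypothesis HG : is_group mul one inv.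
Variable S : seq G.

Local Notation val := (word_val mul one inv S).

Lemma group_mulKg x y : mul (inv x) (mul x y) = y.
Proof. by rewrite (Defs.mulA HG) (Defs.mulVg HG) (Defs.mul1g HG). Qed.

Lemma group_mul_inj x : injective (mul x).
Proof. by move=> y z E; rewrite -(group_mulKg x y) E group_mulKg. Qed.

Lemma group_mulgV x : mul x (inv x) = one.
Proof.
set e := mul x (inv x).
have ee : mul e e = e by rewrite /e -(Defs.mulA HG) group_mulKg.
by rewrite -(Defs.mulVg HG e) -{3}ee group_mulKg.
Qed.

Lemma group_mulg1 x : mul x one = x.
Proof. by rewrite -(Defs.mulVg HG x) (Defs.mulA HG) group_mulgV (Defs.mul1g HG). Qed.

Lemma word_val_cat w1 w2 : val (w1 ++ w2) = mul (val w1) (val w2).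
Proof. by elim: w1 => [|l w1 IH] /=; rewrite ?(Defs.mul1g HG) // IH (Defs.mulA HG). Qed.

Lemma word_val_rcons w l : val (rcons w l) = mul (val w) (letter_val one inv S l).
Proof. by rewrite -cats1 word_val_cat /= group_mulg1. Qed.

Lemma word_val_take_drop w i j :
  i <= j -> val (take j w) = mul (val (take i w)) (val (drop i (take j w))).
Proof. by move=> Hij; rewrite -word_val_cat -{1}(take_takel w Hij) cat_take_drop. Qed.

Lemma eq_word_val_take w i j : i <= j ->
  (val (take i w) = val (take j w)) <-> val (drop i (take j w)) = one.
Proof.
move=> Hij; rewrite (word_val_take_drop w Hij).
split=> [E | ->]; last by rewrite group_mulg1.
by apply: (@group_mul_inj (val (take i w))); rewrite -E group_mulg1.
Qed.

Definition ouroboros_word (B : seq edge) (w : seq letter) (z : nat -> nat) : Prop :=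
  [/\ 3 <= size w, all (valid_letter S) w,
      forall i, i < size w -> (z i, z i.+1, nth (0, false) w i) \in B,
      forall i j, i < j < size w -> val (drop i (take j w)) <> one
    & val w = one].

Lemma walk_prefix_val (om : nat -> G) w :
  (forall i, i < size w ->
     mul (inv (om i)) (om i.+1) = letter_val one inv S (nth (0, false) w i)) ->
  forall i, i <= size w -> om i = mul (om 0) (val (take i w)).
Proof.
move=> Hstep; elim=> [|i IH] Hi; first by rewrite take0 /= group_mulg1.
rewrite (take_nth (0, false) Hi) word_val_rcons -Hstep // (Defs.mulA HG) -IH ?(ltnW Hi) //.
by rewrite (Defs.mulA HG) group_mulgV (Defs.mul1g HG).
Qed.

Lemma has_ouroborosP B : has_ouroboros mul one inv S B <-> exists w z, ouroboros_word B w z.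
Proof.
split=> [[n [om [z [Hn [Hinj [Hcl Hstep]]]]]] | [w [z [Hsize Hvalid Hedge Hsimple Hclosed]]]].
  have [w [Hw Hls]] := bounded_choice_seq (0, false) Hstep.
  have Hom : forall i, i <= n -> om i = mul (om 0) (val (take i w)).
    by rewrite -Hw; apply: walk_prefix_val => i; rewrite Hw => /Hls [_ []].
  exists w, z; split; rewrite ?Hw //.
  - by apply/(all_nthP (0, false)) => i; rewrite Hw => /Hls [].
  - by move=> i /Hls [_ []].
  - move=> i j /andP [lt_ij lt_jn] /(eq_word_val_take w (ltnW lt_ij)) E.
    have lt_in := ltn_trans lt_ij lt_jn.
    have := Hinj i j lt_in lt_jn; rewrite (Hom i (ltnW lt_in)) (Hom j (ltnW lt_jn)) E.
    move=> /(_ erefl) E'.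
    by rewrite E' ltnn in lt_ij.
  - apply: (@group_mul_inj (om 0)); rewrite group_mulg1 -{2}Hcl (Hom n) //.
    by rewrite -Hw take_size.
exists (size w), (fun i => val (take i w)), z; split=> //; split; [|split].
- move=> i j lt_i lt_j E; case: (ltngtP i j) => // [lt_ij | lt_ji].
  + case: (Hsimple i j); first by rewrite lt_ij.
    exact/(eq_word_val_take _ (ltnW lt_ij)).
  + case: (Hsimple j i); first by rewrite lt_ji.
    exact/(eq_word_val_take _ (ltnW lt_ji)).
- by rewrite take_size take0.
- move=> i lt_i; exists (nth (0, false) w i); split; first exact: (all_nthP _ Hvalid).
  by rewrite /= (take_nth (0, false) lt_i) word_val_rcons group_mulKg; split=> //; apply: Hedge.
Qed.

Variable wp : nat -> bool.
Hypothesis wpP : forall n, reflect (word_problem mul one inv S n) (wp n).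

Lemma wp_code_word w : all (valid_letter S) w -> wp (code_word w) <-> val w = one.
Proof.
move=> Hw; split=> [/wpP [w' [/code_word_inj <- [_ ->]]] // | E].
by apply/wpP; exists w.
Qed.

Lemma wp_code_window L m i j : i <= j -> j <= m -> all (valid_letter S) (decode_word L m) ->
  wp (code_window L j (j - i)) <-> val (drop i (take j (decode_word L m))) = one.
Proof.
move=> Hij Hjm Hvalid; rewrite (code_window_decode_word L Hij Hjm) wp_code_word //.
by apply/allP => x /mem_drop /mem_take; apply: (allP Hvalid).
Qed.

Lemma ouroboros_checkP B m L Z :
  ouroboros_check (size S) wp (code_graph B) m L Z <->
  tileset_graph S B /\ ouroboros_word B (decode_word L m) (code_nth Z).
Proof.
set ls := decode_word L m; have size_ls : size ls = m by rewrite size_mkseq.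
rewrite /ouroboros_check; split.
  case/and5P => H3 /tileset_checkP HB /allP steps /allP simple closed.
  have step i : i < m -> valid_letter S (nth (0, false) ls i) &&
      ((code_nth Z i, code_nth Z i.+1, nth (0, false) ls i) \in B).
    by move=> Hi; rewrite -(step_check_decode_word S B L Z Hi) steps // mem_iota0.
  have Hvalid : all (valid_letter S) ls.
    by apply/(all_nthP (0, false)) => i; rewrite size_ls => /step /andP [].
  split=> //; split; rewrite ?size_ls //.
  - by move=> i /step /andP [].
  - move=> i j /andP [lt_ij lt_jm] /(wp_code_window (ltnW lt_ij) (ltnW lt_jm) Hvalid).
    by apply/negP/(allP (simple j _)); rewrite mem_iota0.
  - have := wp_code_window (leq0n m) (leqnn m) Hvalid.
    by rewrite subn0 drop0 take_oversize ?size_ls // => <-.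
case=> /tileset_checkP HB [H3 Hvalid Hedge Hsimple Hclosed].
rewrite size_ls in H3 Hedge Hsimple; apply/and5P; split=> //.
- apply/allP => i; rewrite mem_iota0 => Hi.
  by rewrite (step_check_decode_word S B L Z Hi) (all_nthP _ Hvalid) ?size_ls // Hedge.
- apply/allP => j; rewrite mem_iota0 => Hj; apply/allP => i; rewrite mem_iota0 => Hi.
  by apply/negP => /(wp_code_window (ltnW Hi) (ltnW Hj) Hvalid); apply: Hsimple; rewrite Hi.
- have := wp_code_window (leq0n m) (leqnn m) Hvalid.
  by rewrite subn0 drop0 take_oversize ?size_ls // => ->.
Qed.

Lemma ouroboros_word_eq B w z z' :
  (forall i, i <= size w -> z i = z' i) -> ouroboros_word B w z -> ouroboros_word B w z'.
Proof.
move=> E [H3 Hvalid Hedge Hsimple Hclosed]; split=> // i Hi.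
by rewrite -!E ?(ltnW Hi) //; apply: Hedge.
Qed.

Lemma ouroboros_problemP n :
  ouroboros_problem mul one inv S n <-> exists w, ouroboros_certificate (size S) wp n w.
Proof.
split=> [[B [-> [HB /has_ouroborosP [w [z Hwz]]]]] | [c]].
  exists (cpair (size w) (cpair (code_word w) (code_list (mkseq z (size w).+1)))).
  rewrite /ouroboros_certificate pi1_cpair !pi2_cpair pi1_cpair.
  apply/ouroboros_checkP; split; rewrite ?decode_word_code //.
  by apply: ouroboros_word_eq Hwz => i Hi; rewrite code_nth_list ?nth_mkseq ?size_mkseq.
have [B <-] := code_graph_surj n; case/ouroboros_checkP => HB Hw.
by exists B; split; [|split; last apply/has_ouroborosP; eauto].
Qed.

End Ouroboros.

Definition decide (P : Prop) : bool := if excluded_middle_informative P then true else false.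

Lemma decideP P : reflect P (decide P).
Proof. by rewrite /decide; case: excluded_middle_informative => H; constructor. Qed.

Lemma decidable_set_computable (P : nat -> Prop) :
  decidable_set P -> computable_bool 1 (fun v => decide (P (nth 0 v 0))).
Proof.
case=> d Hd; exists d => [[|n [|]]] //= _.
by case: decideP; case: (Hd n) => [[HP Ed] | [HP Ed]] HP'.
Qed.

Lemma sigma01_exists_computable (P : nat -> Prop) (R : nat -> nat -> bool) :
  computable_bool 2 (fun v => R (nth 0 v 1) (nth 0 v 0)) ->
  (forall n, P n <-> exists w, R n w) -> sigma01 P.
Proof.
move=> CR HP; have [p Hp] := computable_not CR.
exists (PMu p) => n; rewrite HP; split.
  case/ex_minnP => w Rw min_w; exists w; constructor.
    by have := Hp [:: w; n] erefl; rewrite /= Rw.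
  move=> m lt_mw; exists 0; have := Hp [:: m; n] erefl.
  by case: (boolP (R n m)) => // /min_w; rewrite leqNgt lt_mw.
case=> y Hy; inversion Hy as [| | | | | |? ? ? Hy0 _]; subst.
by exists y; have := peval_det (Hp [:: y; n] erefl) Hy0; case: (R n y).
Qed.

Theorem proposition2 (G : Type) (mul : G -> G -> G) (one : G) (inv : G -> G)
  (HG : is_group mul one inv) (S : seq G)
  (HS : generates mul one inv S)
  (HWP : decidable_set (word_problem mul one inv S)) :
  sigma01 (ouroboros_problem mul one inv S).
Proof.
pose wp n := decide (word_problem mul one inv S n).
have Cwp k a : computable k a -> computable_bool k (fun v => wp (a v)).
  exact: (computable_comp1 (f := fun n => nat_of_bool (wp n)) (decidable_set_computable HWP)).
apply: (sigma01_exists_computable (computable_ouroboros_certificate (size S) Cwp)).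
by move=> n; apply: ouroboros_problemP => // m; exact: decideP.
Qed.
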